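(* Let $C$ be a finite set of candidates, $a\in C$, and $P=(\succ_1,\dots,\succ_n)$ a profile of linear orders over $C$. Let $B$ be the $0/1$ matrix with rows indexed by $b\in C\setminus\{a\}$ and columns indexed by voters $i\in\{1,\dots,n\}$, with $B_{b,i}=1$ iff $b\succ_i a$. (This is the constraint matrix of the program (Young-IP): minimise $\sum_i d_i$ subject to $\sum_{i:\,b\succ_i a}d_i\ge\mathrm{maj}(b,a)+1$ for all $b\ne a$, $d_i\in\{0,1\}$, ignoring the bounds on $d_i$; here $\mathrm{maj}(b,a)=|\{i:b\succ_ia\}|-|\{i:a\succ_ib\}|$.) If $P$ is single-crossing, then $B$ is totally unimodular.
   Context: A profile of linear orders is single-crossing if the voters can be ordered so that for every pair $a,b\in C$, the set of voters $i$ with $a\succ_i b$ forms an interval of this voter ordering. A matrix is totally unimodular if every square submatrix has determinant in $\{-1,0,1\}$. *)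

From mathcomp Require Import all_boot all_order all_algebra all_fingroup.
Set Implicit Arguments. Unset Strict Implicit. Unset Printing Implicit Defensive.
Import GRing.Theory Num.Theory.
Local Open Scope ring_scope.

Definition strict_linear_order (C : finType) (r : rel C) : Prop :=
  [/\ irreflexive r, transitive r & forall x y, x != y -> r x y || r y x].

(* A profile of n voters: voter i prefers x to y iff P i x y. *)
Definition is_profile (C : finType) (n : nat) (P : 'I_n -> rel C) : Prop :=
  forall i, strict_linear_order (P i).

Definition single_crossing (C : finType) (n : nat) (P : 'I_n -> rel C) : Prop :=
  exists sigma : 'S_n, forall (x y : C) (k1 k2 k3 : 'I_n),
    (k1 <= k2 <= k3)%N -> P (sigma k1) x y -> P (sigma k3) x y ->
    P (sigma k2) x y.

Definition totally_unimodular (R Cl : finType) (M : R -> Cl -> int) : Prop :=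
  forall (k : nat) (f : 'I_k -> R) (g : 'I_k -> Cl),
    injective f -> injective g ->
    \det (\matrix_(i < k, j < k) M (f i) (g j)) \in [:: -1; 0; 1].

Definition young_matrix (C : finType) (a : C) (n : nat) (P : 'I_n -> rel C)
  : {b : C | b != a} -> 'I_n -> int :=
  fun b i => if P i (val b) a then 1 else 0.

From mathcomp Require Import all_boot all_order all_algebra all_fingroup.
From mathcomp Require Import zify.
Set Implicit Arguments. Unset Strict Implicit. Unset Printing Implicit Defensive.
Import GRing.Theory Num.Theory.
Local Open Scope ring_scope.

(* Listing the voters in the single-crossing order, each row of the Young
   matrix has its ones on an interval, so every square submatrix of it has the
   consecutive-ones property in its rows with respect to the order of its
   columns.  Such a 0/1 matrix has determinant in {-1, 0, 1}: the rows having a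
   one in the leftmost column j0 have nested supports (intervals starting at
   j0), and subtracting the smaller from the larger keeps a consecutive-ones
   0/1 matrix with the same determinant and fewer ones in column j0.  Once
   column j0 has at most one one, Laplace expansion along it leaves a smaller
   consecutive-ones matrix. *)

Definition zero_one_mx m n (A : 'M[int]_(m, n)) : Prop :=
  forall i j, A i j = 0 \/ A i j = 1.

(* [pos j] is the position of column [j] in the column order; ties are allowed. *)
Definition consecutive_ones m n (pos : 'I_n -> nat) (A : 'M[int]_(m, n)) : Prop :=
  forall i j1 j2 j3, (pos j1 <= pos j2 <= pos j3)%N ->
    A i j1 = 1 -> A i j3 = 1 -> A i j2 = 1.

Definition col_ones m n (A : 'M[int]_(m, n)) j := [pred i | A i j == 1].

Definition row_subr (R : zmodType) m n (b s : 'I_m) (A : 'M[R]_(m, n)) :=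
  \matrix_(r, j) if r == b then A b j - A s j else A r j.

Lemma mem_N101 (x : int) : (x \in [:: -1; 0; 1]) = (`|x| <= 1).
Proof. by rewrite !inE; apply/idP/idP; lia. Qed.

Lemma subr_eq1_01 (x y : int) : (x = 0 \/ x = 1) -> (y = 0 \/ y = 1) ->
  (x - y = 1) <-> (x = 1 /\ y = 0).
Proof. by case=> ->; case=> ->; split; lia. Qed.

Lemma det_row_subr (R : comNzRingType) n (A : 'M[R]_n) b s :
  b != s -> \det (row_subr b s A) = \det A.
Proof.
move=> neq_bs.
pose B := \matrix_(r, j) if r == b then A s j else A r j.
have nlift r : (lift b r == b) = false by apply/negbTE; rewrite eq_sym neq_lift.
have -> : \det A = 1 * \det (row_subr b s A) + 1 * \det B.
  apply: (@determinant_multilinear _ _ A _ B b).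
  - by apply/rowP => j; rewrite /row_subr !mxE eqxx !mul1r subrK.
  - by apply/matrixP => r j; rewrite /row_subr !mxE nlift.
  - by apply/matrixP => r j; rewrite !mxE nlift.
have detB : \det B = 0.
  apply: (determinant_alternate neq_bs) => j.
  by rewrite !mxE eqxx eq_sym (negbTE neq_bs).
by rewrite detB mulr0 addr0 mul1r.
Qed.

Lemma det_col_single (R : comNzRingType) n (A : 'M[R]_n) i0 j0 :
  (forall i, i != i0 -> A i j0 = 0) -> \det A = A i0 j0 * cofactor A i0 j0.
Proof.
move=> col0; rewrite (expand_det_col A j0) (bigD1 i0) //= big1 ?addr0 //.
by move=> i /col0 ->; rewrite mul0r.
Qed.

Lemma zero_one_minor m n (i0 : 'I_m.+1) (j0 : 'I_n.+1) (M : 'M[int]_(m.+1, n.+1)) :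
  zero_one_mx M -> zero_one_mx (row' i0 (col' j0 M)).
Proof. by move=> M01 i j; rewrite !mxE. Qed.

Lemma consecutive_ones_minor m n (i0 : 'I_m.+1) (j0 : 'I_n.+1) pos'
    (M : 'M[int]_(m.+1, n.+1)) :
  consecutive_ones pos' M ->
  consecutive_ones (pos' \o lift j0) (row' i0 (col' j0 M)).
Proof. by move=> Mcons i j1 j2 j3 hpos; rewrite !mxE; apply: Mcons. Qed.

Lemma zero_one_col_le1 m n (A : 'M[int]_(m.+1, n)) j0 :
  zero_one_mx A -> (#|col_ones A j0| <= 1)%N ->
  exists i0, forall i, i != i0 -> A i j0 = 0.
Proof.
move=> A01 /card_le1_eqP ones_eq.
case: (pickP (col_ones A j0)) => [i0 Ai0 | none].
  exists i0 => i neq_ii0; have [//|Ai] := A01 i j0.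
  by case/eqP: neq_ii0; apply: ones_eq; rewrite // inE Ai.
exists ord0 => i _; have [//|Ai] := A01 i j0.
by move: (none i); rewrite /= Ai eqxx.
Qed.

Section ConsecutiveOnes.

Variables (m n : nat) (pos : 'I_n -> nat) (A : 'M[int]_(m, n)).
Hypotheses (A01 : zero_one_mx A) (Acons : consecutive_ones pos A).

Variable j0 : 'I_n.
Hypothesis j0_min : forall j, (pos j0 <= pos j)%N.

Lemma consecutive_ones_nested i i' : A i j0 = 1 -> A i' j0 = 1 ->
  (forall j, A i j = 1 -> A i' j = 1) \/ (forall j, A i' j = 1 -> A i j = 1).
Proof.
move=> Ai Ai'.
have [/forallP sub | ] := boolP [forall j, (A i j == 1) ==> (A i' j == 1)].
  by left=> j /eqP Aij; apply/eqP; apply: (implyP (sub j)); rewrite Aij.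
rewrite negb_forall => /existsP [j]; rewrite negb_imply => /andP [/eqP Aij nAi'j].
right=> j' Ai'j'; apply/eqP/negPn/negP => nAij'.
have [le_jj' | lt_j'j] := leqP (pos j) (pos j').
  by move/eqP: nAi'j; apply; apply: (Acons (j1 := j0) (j3 := j')); rewrite // j0_min.
by move/eqP: nAij'; apply; apply: (Acons (j1 := j0) (j3 := j)); rewrite // j0_min ltnW.
Qed.

Variables b s : 'I_m.
Hypotheses (As : A s j0 = 1) (sub_sb : forall j, A s j = 1 -> A b j = 1).

Lemma zero_one_row_subr : zero_one_mx (row_subr b s A).
Proof.
move=> r j; rewrite /row_subr mxE; case: ifP => _; last exact: A01.
have [Asj|Asj] := A01 s j; first by rewrite Asj subr0; apply: A01.
by rewrite Asj (sub_sb Asj) subrr; left.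
Qed.

(* Row [s] is an interval starting at [j0], so the ones of [A b - A s] form
   the part of the interval of row [b] lying to the right of it. *)
Lemma consecutive_ones_row_subr : consecutive_ones pos (row_subr b s A).
Proof.
move=> r j1 j2 j3 hpos; rewrite /row_subr !mxE; case: ifP => _; last exact: Acons.
rewrite !subr_eq1_01 // => -[Ab1 As1] [Ab3 _]; split; first exact: Acons hpos Ab1 Ab3.
have [//|As2] := A01 s j2; case/andP: hpos => le12 _.
suff: A s j1 = 1 by rewrite As1 => /eqP.
by apply: (Acons (j1 := j0) (j3 := j2)); rewrite // j0_min.
Qed.

Lemma card_col_ones_row_subr : A b j0 = 1 ->
  (#|col_ones (row_subr b s A) j0| < #|col_ones A j0|)%N.
Proof.
move=> Ab; rewrite [X in (_ < X)%N](cardD1 b) inE Ab eqxx ltnS.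
apply/subset_leq_card/subsetP => i; rewrite !inE /row_subr !mxE.
by case: (eqVneq i b) => [->|//]; rewrite Ab As subrr.
Qed.

End ConsecutiveOnes.

Lemma det_consecutive_ones k (pos : 'I_k -> nat) (A : 'M[int]_k) :
  zero_one_mx A -> consecutive_ones pos A -> `|\det A| <= 1.
Proof.
elim: k pos A => [|k IH] pos A A01 Acons; first by rewrite det_mx00 normr1.
pose j0 := [arg min_(j < ord0) pos j].
have j0_min j : (pos j0 <= pos j)%N.
  by rewrite /j0; case: arg_minnP => // i _; apply.
have [c] := ubnP #|col_ones A j0|.
elim: c => // c IHc in A A01 Acons *; rewrite ltnS => ones_le.
have [/card_gt1P [i1 [i2 []]] | /(zero_one_col_le1 A01) [i0 col0]] :=
  ltnP 1 #|col_ones A j0|.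
  rewrite !inE => /eqP A1 /eqP A2 neq12.
  have [b [s [neq_bs Ab As sub_sb]]] : exists b s, [/\ b != s, A b j0 = 1,
      A s j0 = 1 & forall j, A s j = 1 -> A b j = 1].
    case: (consecutive_ones_nested Acons j0_min A1 A2) => sub.
      by exists i2, i1; rewrite eq_sym.
    by exists i1, i2.
  rewrite -(det_row_subr A neq_bs); apply: IHc.
  - exact: zero_one_row_subr.
  - exact: consecutive_ones_row_subr.
  - exact: leq_trans (card_col_ones_row_subr As Ab) ones_le.
rewrite (det_col_single col0) normrM -[1]mul1r; apply: ler_pM => //.
  by have [->|->] := A01 i0 j0; rewrite ?normr0 ?normr1.
rewrite /cofactor normrM normr_sign mul1r.
by apply: IH; [exact: zero_one_minor | exact: consecutive_ones_minor Acons].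
Qed.

Theorem mainTheorem8 (C : finType) (a : C) (n : nat) (P : 'I_n -> rel C) :
  is_profile P -> single_crossing P -> totally_unimodular (@young_matrix C a n P).
Proof.
move=> _ [sigma interval] k f g _ _; rewrite mem_N101.
apply: (@det_consecutive_ones k (fun j => (sigma^-1)%g (g j) : nat)).
  by move=> i j; rewrite mxE /young_matrix; case: ifP; [right | left].
move=> i j1 j2 j3 hpos; rewrite !mxE.
have young1 v : young_matrix P (f i) v = 1 <-> P v (val (f i)) a.
  by rewrite /young_matrix; case: ifP.
move=> /young1 h1 /young1 h3; apply/young1.
by move: (interval (val (f i)) a _ _ _ hpos); rewrite !permKV; apply.
Qed.
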